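(* The translation of LTL formulas whose languages are recognizable by deterministic co-Büchi word automata into GFG-NSWs is doubly exponential: in the worst case, a GFG-NSW equivalent to such a formula requires a number of states doubly exponential in the length of the formula.
   Context: LTL is linear temporal logic; the language of an LTL formula over atomic propositions $AP$ is the set of infinite words over $2^{AP}$ satisfying it. An NSW is a nondeterministic Streett word automaton $\langle\Sigma,Q,Q_0,\delta,\alpha\rangle$ with $\delta:Q\times\Sigma\to2^Q$ and $\alpha$ a set of pairs $\langle E,F\rangle$; a run is accepting iff for every pair the set $S$ of infinitely visited states satisfies $S\cap E=\emptyset$ or $S\cap F\ne\emptyset$. A deterministic co-Büchi word automaton (DCW) is a deterministic automaton with $\alpha\subseteq Q$ accepting runs that visit $\alpha$ only finitely often. An automaton is GFG if there is a strategy $g:\Sigma^*\to Q$ such that for every $w=a_1a_2\cdots$, $g(\epsilon),g(a_1),g(a_1a_2),\ldots$ is a run on $w$, accepting whenever $w$ is in the language. *)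

From mathcomp Require Import all_boot.
Set Implicit Arguments. Unset Strict Implicit. Unset Printing Implicit Defensive.

Inductive ltl (AP : Type) : Type :=
| LTrue | LFalse
| LAtom of AP
| LNot of ltl AP
| LAnd of ltl AP & ltl AP
| LOr of ltl AP & ltl AP
| LNext of ltl AP
| LUntil of ltl AP & ltl AP
| LRelease of ltl AP & ltl AP
| LEventually of ltl AP
| LGlobally of ltl AP.

Fixpoint ltl_size AP (f : ltl AP) : nat :=
  match f with
  | LTrue | LFalse | LAtom _ => 1
  | LNot g | LNext g | LEventually g | LGlobally g => (ltl_size g).+1
  | LAnd g h | LOr g h | LUntil g h | LRelease g h => (ltl_size g + ltl_size h).+1
  end.

Definition word (AP : finType) := nat -> {set AP}.

Fixpoint sat (AP : finType) (w : word AP) (i : nat) (f : ltl AP) : Prop :=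
  match f with
  | LTrue => True
  | LFalse => False
  | LAtom p => p \in w i
  | LNot g => ~ sat w i g
  | LAnd g h => sat w i g /\ sat w i h
  | LOr g h => sat w i g \/ sat w i h
  | LNext g => sat w i.+1 g
  | LUntil g h => exists k, i <= k /\ sat w k h /\ forall j, i <= j < k -> sat w j g
  | LRelease g h => forall k, i <= k -> sat w k h \/ exists j, i <= j < k /\ sat w j g
  | LEventually g => exists k, i <= k /\ sat w k g
  | LGlobally g => forall k, i <= k -> sat w k g
  end.

Definition ltl_lang (AP : finType) (f : ltl AP) (w : word AP) : Prop := sat w 0 f.

Definition inf_often (Q : eqType) (r : nat -> Q) (q : Q) : Prop :=
  forall N, exists i, N <= i /\ r i = q.

Record NSW (Sigma : Type) := {
  nsw_state : finType;
  nsw_init : {set nsw_state};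
  nsw_delta : nsw_state -> Sigma -> {set nsw_state};
  nsw_acc : seq ({set nsw_state} * {set nsw_state})
}.
Arguments nsw_state {Sigma} n.
Arguments nsw_init {Sigma} n.
Arguments nsw_delta {Sigma} n _ _.
Arguments nsw_acc {Sigma} n.

Definition nsw_is_run Sigma (A : NSW Sigma) (w : nat -> Sigma) (r : nat -> nsw_state A) :=
  r 0 \in nsw_init A /\ forall i, r i.+1 \in nsw_delta A (r i) (w i).
Arguments nsw_is_run {Sigma} A w r.

Definition nsw_accepting Sigma (A : NSW Sigma) (r : nat -> nsw_state A) :=
  forall EF, EF \in nsw_acc A ->
    (forall q, q \in EF.1 -> ~ inf_often r q) \/
    (exists q, q \in EF.2 /\ inf_often r q).
Arguments nsw_accepting {Sigma} A r.

Definition nsw_lang Sigma (A : NSW Sigma) (w : nat -> Sigma) : Prop :=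
  exists r, nsw_is_run A w r /\ nsw_accepting A r.

Definition prefix Sigma (w : nat -> Sigma) (i : nat) : seq Sigma := mkseq w i.

Definition GFG Sigma (A : NSW Sigma) : Prop :=
  exists g : seq Sigma -> nsw_state A,
    forall w : nat -> Sigma,
      nsw_is_run A w (fun i => g (prefix w i)) /\
      (nsw_lang A w -> nsw_accepting A (fun i => g (prefix w i))).

Record DCW (Sigma : Type) := {
  dcw_state : finType;
  dcw_init : dcw_state;
  dcw_delta : dcw_state -> Sigma -> dcw_state;
  dcw_alpha : {set dcw_state}
}.
Arguments dcw_state {Sigma} d.
Arguments dcw_init {Sigma} d.
Arguments dcw_delta {Sigma} d _ _.
Arguments dcw_alpha {Sigma} d.

Fixpoint dcw_run Sigma (A : DCW Sigma) (w : nat -> Sigma) (i : nat) : dcw_state A :=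
  match i with
  | 0 => dcw_init A
  | i'.+1 => dcw_delta A (@dcw_run Sigma A w i') (w i')
  end.
Arguments dcw_run {Sigma} A w i.

Definition dcw_lang Sigma (A : DCW Sigma) (w : nat -> Sigma) : Prop :=
  exists N, forall i, N <= i -> dcw_run A w i \notin dcw_alpha A.

Definition DCW_recognizable Sigma (L : (nat -> Sigma) -> Prop) : Prop :=
  exists A : DCW Sigma, forall w, dcw_lang A w <-> L w.

(* Over the propositions b_0, ..., b_(n-1) and #, the formula [phi] says that some
   letter carries the same bit vector as the next #-letter after it.  A DCW checks
   this by storing the set of bit vectors read since the last #.  A GFG automaton
   must distinguish all these sets: if u_X lists the elements of a set X of bit
   vectors, then u_X x# ∅^ω is in the language iff x ∈ X; and if the strategy g
   sends u_X and u_T to the same state, splicing the run g builds on u_T t with the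
   accepting run it builds on u_X t shows that u_X and u_T have the same residual
   language.  Hence g takes 2^(2^n) distinct values. *)

From Pilot Require Import Defs.
From mathcomp Require Import all_boot zify.

Set Implicit Arguments. Unset Strict Implicit. Unset Printing Implicit Defensive.

Section Residuals.
Variable Sigma : Type.

Definition catw (u : seq Sigma) (t : nat -> Sigma) : nat -> Sigma :=
  fun i => nth (t (i - size u)) u i.

Lemma catw_ge u t i : size u <= i -> catw u t i = t (i - size u).
Proof. exact: nth_default. Qed.

Lemma prefix_catw u t : Defs.prefix (catw u t) (size u) = u.
Proof.
rewrite /Defs.prefix -[RHS](mkseq_nth (t 0)) /mkseq; apply/eq_in_map => i.
by rewrite mem_iota add0n /catw => /andP[_]; apply: set_nth_default.
Qed.

Lemma inf_often_shift (Q : eqType) (r r' : nat -> Q) a b :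
  (forall i, r' (i + a) = r (i + b)) -> forall q, inf_often r q -> inf_often r' q.
Proof.
move=> rr' q rq N; have [i [leNi <-]] := rq (N + b).
by exists (i - b + a); split; [lia | rewrite rr' subnK //; lia].
Qed.

Lemma nsw_accepting_shift (A : NSW Sigma) (r r' : nat -> nsw_state A) a b :
  (forall i, r' (i + a) = r (i + b)) -> nsw_accepting A r -> nsw_accepting A r'.
Proof.
move=> rr' acc EF /acc[noE | [q [qF qinf]]].
- left=> q qE /(inf_often_shift (a := b) (b := a) (r' := r)) qinf.
  by apply: noE qE (qinf _).
- by right; exists q; split=> //; apply: inf_often_shift qinf.
Qed.

Definition gfg_strategy (A : NSW Sigma) (g : seq Sigma -> nsw_state A) :=
  forall w, nsw_is_run A w (fun i => g (Defs.prefix w i)) /\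
    (nsw_lang A w -> nsw_accepting A (fun i => g (Defs.prefix w i))).
Arguments gfg_strategy : clear implicits.

(* The run on [u' t] follows [g] along [u'] and, once [g u' = g u], switches to
   the accepting run that [g] produces on [u t]. *)
Lemma gfg_strategy_residual A g u u' t :
  gfg_strategy A g -> g u = g u' -> nsw_lang A (catw u t) -> nsw_lang A (catw u' t).
Proof.
move=> gA guu' Lut.
have [[_ run_ut] _] := gA (catw u t).
have acc_ut := (gA (catw u t)).2 Lut.
have [[init_u't run_u't] _] := gA (catw u' t).
set r := fun i => g (Defs.prefix (catw u t) i) in run_ut acc_ut.
pose r' i := if i <= size u' then g (Defs.prefix (catw u' t) i)
             else r (i - size u' + size u).
have r'_shift i : size u' <= i -> r' i = r (i - size u' + size u).
  rewrite /r' leq_eqVlt => /orP[/eqP <- | lt_u'i]; last by rewrite leqNgt lt_u'i.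
  by rewrite leqnn prefix_catw subnn /r prefix_catw guu'.
exists r'; split; [split | ].
- by rewrite /r' leq0n.
- move=> i; case: (ltnP i (size u')) => [lt_iu' | le_u'i].
    by rewrite /r' lt_iu' ltnW.
  have shiftS : i.+1 - size u' + size u = (i - size u' + size u).+1.
    by rewrite subSn.
  have same_letter : catw u' t i = catw u t (i - size u' + size u).
    by rewrite !catw_ge ?addnK ?leq_addl.
  by rewrite !r'_shift ?leqW // shiftS same_letter; apply: run_ut.
- apply: (nsw_accepting_shift (a := size u') (b := size u) _ acc_ut) => i.
  by rewrite r'_shift ?leq_addl // addnK.
Qed.

Lemma card_gfg_states_ge (I : finType) (A : NSW Sigma) (u : I -> seq Sigma) :
  GFG A ->
  (forall i j, (forall t, nsw_lang A (catw (u i) t) <-> nsw_lang A (catw (u j) t)) ->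
     i = j) ->
  #|I| <= #|nsw_state A|.
Proof.
move=> [g gA] residual_inj; apply: (@leq_card _ _ (g \o u)) => i j /= gij.
by apply: residual_inj => t; split; apply: gfg_strategy_residual gA _.
Qed.

End Residuals.

Definition ltl_iff AP (f g : ltl AP) := LOr (LAnd f g) (LAnd (LNot f) (LNot g)).

Lemma sat_ltl_iff_atom (AP : finType) (w : word AP) i p f :
  sat w i (ltl_iff (LAtom p) f) <-> (p \in w i <-> sat w i f).
Proof.
split=> [[[wp wf] | [wp wf]] | wpf] //=.
have [wp | wp] := boolP (p \in w i); first by left; split=> //; apply/wpf.
by right; split=> [|/wpf]; apply/negP.
Qed.

Section Formula.
Variable n : nat.
Local Notation AP := 'I_n.+1.

Definition sharp : AP := ord_max.
Definition bit (k : nat) : AP := inord k.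

Definition bit_at_next_sharp k :=
  LNext (LUntil (LNot (LAtom sharp)) (LAnd (LAtom sharp) (LAtom (bit k)))).
Definition bit_agrees k := ltl_iff (LAtom (bit k)) (bit_at_next_sharp k).
Fixpoint bits_agree k :=
  if k is k'.+1 then LAnd (bit_agrees k') (bits_agree k') else LTrue AP.
Definition phi :=
  LEventually (LAnd (LNext (LEventually (LAtom sharp))) (bits_agree n)).

Lemma ltl_size_phi : ltl_size phi <= 22 * n.+1.
Proof.
have size_bits_agree k : ltl_size (bits_agree k) = 22 * k + 1.
  by elim: k => //= k ->; lia.
by rewrite /= size_bits_agree; lia.
Qed.

Definition bits (a : {set AP}) : {set 'I_n} := [set k : 'I_n | bit k \in a].

Lemma eq_bits a b :
  bits a = bits b <-> forall k, k < n -> (bit k \in a) = (bit k \in b).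
Proof.
split=> [eq_ab k ltkn | eq_ab].
  by have := congr1 (fun s : {set 'I_n} => Ordinal ltkn \in s) eq_ab; rewrite !inE.
by apply/setP => k; rewrite !inE eq_ab.
Qed.

Definition no_sharp_between (w : word AP) l j :=
  forall x, l < x < j -> sharp \notin w x.
Definition next_sharp (w : word AP) l j :=
  [/\ l < j, sharp \in w j & no_sharp_between w l j].
Definition repeat_at_sharp (w : word AP) :=
  exists l j, next_sharp w l j /\ bits (w l) = bits (w j).

Lemma exists_next_sharp (w : word AP) l k :
  l < k -> sharp \in w k -> exists j, next_sharp w l j.
Proof.
move=> ltlk wk; have exP : exists x, (l < x) && (sharp \in w x) by exists k; rewrite ltlk.
case: (ex_minnP exP) => j /andP[ltlj wj] j_min; exists j; split=> // x /andP[ltlx ltxj].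
by apply/negP => wx; have := j_min x; rewrite ltlx wx leqNgt ltxj => /(_ isT).
Qed.

Lemma sat_bit_at_next_sharp (w : word AP) l j k :
  next_sharp w l j -> sat w l (bit_at_next_sharp k) <-> bit k \in w j.
Proof.
move=> [ltlj wj between] /=; split=> [[j' [ltlj' [[wj' bj'] before]]] | wbj].
  suff -> : j = j' by [].
  case: (ltngtP j' j) => // [ltj'j | ltjj'].
  + by have := between j'; rewrite ltlj' ltj'j wj' => /(_ isT).
  + by case: (before j); rewrite ?ltlj.
exists j; split=> //; split=> // x /andP[ltlx ltxj].
by apply/negP; apply: between; rewrite ltlx.
Qed.

Lemma sat_bits_agree (w : word AP) i k :
  sat w i (bits_agree k) <-> forall k', k' < k -> sat w i (bit_agrees k').
Proof.
elim: k => [|k IH] //=; split=> [[agk /IH agks] k' | agks].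
  by rewrite ltnS leq_eqVlt => /orP[/eqP -> | /agks].
by split; [apply: agks | apply/IH => k' ltk'k; apply: agks; lia].
Qed.

Lemma phi_repeat_at_sharp (w : word AP) : ltl_lang phi w <-> repeat_at_sharp w.
Proof.
rewrite /ltl_lang /=; split=> [[l [_ [[k [ltlk wk]] agree]]] | [l [j [nsj eqb]]]].
  have [j nsj] := exists_next_sharp ltlk wk.
  exists l, j; split=> //; apply/eq_bits => k' ltk'n.
  move/sat_bits_agree: agree => /(_ k' ltk'n) /sat_ltl_iff_atom.
  by rewrite (sat_bit_at_next_sharp _ nsj) => agk; apply/idP/idP => /agk.
have [ltlj wj _] := nsj.
exists l; split=> //; split; first by exists j.
apply/sat_bits_agree => k ltkn; apply/sat_ltl_iff_atom.
by rewrite (sat_bit_at_next_sharp _ nsj); move/eq_bits: eqb => /(_ k ltkn) ->.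
Qed.

Definition seen (w : word AP) i v :=
  exists l, [/\ l < i, bits (w l) = v & no_sharp_between w l i].
Definition repeat_before (w : word AP) i :=
  exists l j, [/\ j < i, next_sharp w l j & bits (w l) = bits (w j)].

Lemma seenS (w : word AP) i v :
  seen w i.+1 v <-> bits (w i) = v \/ sharp \notin w i /\ seen w i v.
Proof.
split=> [[l [ltli1 <- between]] | [<- | [wi [l [ltli eqv between]]]]].
- move: ltli1; rewrite ltnS leq_eqVlt => /orP[/eqP -> | ltli]; first by left.
  right; split; first by apply: between; rewrite ltli ltnSn.
  by exists l; split=> // x /andP[ltlx ltxi]; apply: between; rewrite ltlx ltnW.
- by exists i; split=> // x; lia.
- exists l; split=> //; first exact: ltnW.
  move=> x /andP[ltlx]; rewrite ltnS leq_eqVlt => /orP[/eqP -> // | ltxi].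
  by apply: between; rewrite ltlx.
Qed.

Lemma repeat_beforeS (w : word AP) i :
  repeat_before w i.+1 <-> repeat_before w i \/ sharp \in w i /\ seen w i (bits (w i)).
Proof.
split=> [[l [j [ltji1 nsj eqb]]] | [[l [j [ltji nsj eqb]]] | [wi [l [ltli eqb nsb]]]]].
- move: ltji1; rewrite ltnS leq_eqVlt => /orP[/eqP ej | ltji]; last by left; exists l, j.
  by case: nsj => ltlj wj nsb; right; subst j; split=> //; exists l.
- by exists l, j; split=> //; apply: ltnW.
- by exists l, i.
Qed.

Lemma repeat_before_mono (w : word AP) i i' :
  i <= i' -> repeat_before w i -> repeat_before w i'.
Proof. by move=> leii' [l [j [ltji nsj eqb]]]; exists l, j; split=> //; lia. Qed.

(* [None] is the accepting sink, entered at the first repeat; [Some X] records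
   the bit vectors read since the last [sharp]. *)
Definition dcw_phi_step (s : option {set {set 'I_n}}) (a : {set AP}) :=
  if s is Some X then
    if sharp \in a then (if bits a \in X then None else Some [set bits a])
    else Some (bits a |: X)
  else None.

Definition dcw_phi : DCW {set AP} :=
  {| dcw_state := option {set {set 'I_n}}; dcw_init := Some set0;
     dcw_delta := dcw_phi_step; dcw_alpha := [set s | s != None] |}.

Lemma dcw_run_phi (w : word AP) i :
  if dcw_run dcw_phi w i is Some X
  then ~ repeat_before w i /\ forall v, v \in X <-> seen w i v
  else repeat_before w i.
Proof.
elim: i => [|i IH] /=.
  by split=> [[l [j []]] | v] //; rewrite inE; split=> // [[l []]].
case: (dcw_run dcw_phi w i) IH => [X [no_rep seenX] | rep] /=; last first.
  exact: repeat_before_mono rep.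
have [wi | wi] := boolP (sharp \in w i).
  have [biX | biX] := boolP (bits (w i) \in X).
    by apply/repeat_beforeS; right; split=> //; apply/seenX.
  split=> [/repeat_beforeS [//| [_ /seenX]] | v]; first exact/negP.
  rewrite inE seenS wi; split=> [/eqP-> | [<- | [] //]]; by [left | rewrite eqxx].
split=> [/repeat_beforeS [//| []] | v]; first by rewrite (negbTE wi).
rewrite in_setU1 seenS; split=> [/orP[/eqP-> | /seenX] | [<- | [_ /seenX ->]]].
- by left.
- by right.
- by rewrite eqxx.
- by rewrite orbT.
Qed.

Lemma dcw_phi_repeat_at_sharp (w : word AP) : dcw_lang dcw_phi w <-> repeat_at_sharp w.
Proof.
split=> [[N accN] | [l [j [nsj eqb]]]].
  have := accN N (leqnn N); have := dcw_run_phi w N.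
  case: (dcw_run dcw_phi w N) => [X _ | [l [j [_ nsj eqb]]] _]; first by rewrite inE.
  by exists l, j.
exists j.+1 => i ltji; have rep : repeat_before w i.
  by apply: (repeat_before_mono ltji); exists l, j; split.
by have := dcw_run_phi w i; case: (dcw_run dcw_phi w i) => [X [] | ] //; rewrite inE.
Qed.

Lemma bit_lift (k : 'I_n) : bit k = lift sharp k.
Proof. by apply: val_inj; rewrite /= /bump leqNgt ltn_ord inordK // leqW. Qed.

Definition letter (v : {set 'I_n}) (has_sharp : bool) : {set AP} :=
  [set y | if unlift sharp y is Some k then k \in v else has_sharp].

Lemma sharp_letter v h : (sharp \in letter v h) = h.
Proof. by rewrite inE unlift_none. Qed.

Lemma bits_letter v h : bits (letter v h) = v.
Proof. by apply/setP => k; rewrite !inE bit_lift liftK. Qed.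

Definition listing (X : {set {set 'I_n}}) := [seq letter v false | v <- enum X].
Definition probe (x : {set 'I_n}) : word AP :=
  fun i => if i == 0 then letter x true else letter set0 false.

Lemma repeat_at_sharp_listing X x :
  repeat_at_sharp (catw (listing X) (probe x)) <-> x \in X.
Proof.
set w := catw _ _; set s := size (listing X).
have size_enum : size (enum X) = s by rewrite /s size_map.
have w_lt i : i < s -> w i = letter (nth set0 (enum X) i) false.
  by move=> ltis; rewrite /w /catw (nth_map set0) ?size_enum.
have w_ge i : s <= i -> w i = probe x (i - s) by apply: catw_ge.
have sharp_w i : (sharp \in w i) = (i == s).
  case: (ltngtP i s) => [ltis | ltsi | ->].
  - by rewrite w_lt // sharp_letter.
  - by rewrite w_ge ?(ltnW ltsi) // /probe subn_eq0 leqNgt ltsi sharp_letter.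
  - by rewrite w_ge // subnn sharp_letter.
split=> [[l [j [[ltlj wj _] eqb]]] | xX].
  move: wj ltlj eqb; rewrite sharp_w => /eqP -> ltls.
  rewrite (w_ge _ (leqnn s)) subnn (w_lt _ ltls) !bits_letter => <-.
  by rewrite -mem_enum; apply: mem_nth; rewrite size_enum.
have xe : x \in enum X by rewrite mem_enum.
have ltis : index x (enum X) < s by rewrite -size_enum index_mem.
exists (index x (enum X)), s; split; first split.
- exact: ltis.
- by rewrite sharp_w eqxx.
- by move=> y /andP[_ ltys]; rewrite sharp_w (ltn_eqF ltys).
- by rewrite (w_ge _ (leqnn s)) subnn (w_lt _ ltis) !bits_letter (nth_index _ xe).
Qed.

End Formula.

Lemma card_set_of (T : finType) : #|{: {set T}}| = 2 ^ #|T|.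
Proof. by rewrite -[LHS]cardsT -powersetT card_powerset cardsT. Qed.

Theorem corollary24 :
  exists (c : nat) (m : nat -> nat) (phi : forall n, ltl 'I_(m n)),
    0 < c /\
    forall n,
      ltl_size (phi n) <= c * n.+1 /\
      DCW_recognizable (@ltl_lang _ (phi n)) /\
      forall A : NSW {set 'I_(m n)},
        GFG A ->
        (forall w, nsw_lang A w <-> ltl_lang (phi n) w) ->
        2 ^ (2 ^ n) <= #|nsw_state A|.
Proof.
exists 22, (fun n => n.+1), phi; split=> // n; split; first exact: ltl_size_phi.
split.
  by exists (dcw_phi n) => w; rewrite dcw_phi_repeat_at_sharp phi_repeat_at_sharp.
move=> A gfgA langA.
have probeP Y x : nsw_lang A (catw (listing Y) (probe x)) <-> x \in Y.
  by rewrite langA phi_repeat_at_sharp repeat_at_sharp_listing.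
have -> : 2 ^ 2 ^ n = #|{: {set {set 'I_n}}}| by rewrite !card_set_of card_ord.
apply: (card_gfg_states_ge (u := @listing n) gfgA) => X T residualXT.
by apply/setP => x; apply/idP/idP => /probeP /residualXT /probeP.
Qed.
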